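(* Let $\mathcal{M}=(E_t,\mathcal{T})$ be a simple oriented matroid, let $k$ be an integer with $1\le k\le|\mathcal{T}|/2$, and put $h=\lfloor(|\mathcal{T}|-k+1)/2\rfloor$ and $\mathcal{P}=\bigcup_{e\in E_t}\binom{\mathcal{T}^+_e}{h}$. For a family $\mathcal{G}\subseteq\mathcal{P}$ write $U_{\mathcal{G}}=\bigcup_{G\in\mathcal{G}}G$. Then \[ \mathring{\kappa}^{\ast}_k(\mathcal{M})=\binom{|\mathcal{T}|/2}{k}2^k+\sum_{\substack{\mathcal{G}\subseteq\mathcal{P}:\\ 1\le\#\mathcal{G}\le\binom{|\mathcal{T}|-k}{h},\\ |U_{\mathcal{G}}|\le|\mathcal{T}|-k}}(-1)^{\#\mathcal{G}}\sum_{j=0}^{k}\binom{|U_{\mathcal{G}}\cup -U_{\mathcal{G}}|-|U_{\mathcal{G}}|}{j}\binom{\tfrac12\bigl(|\mathcal{T}|-|U_{\mathcal{G}}\cup-U_{\mathcal{G}}|\bigr)}{k-j}2^{k-j}. \]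
   Context: Let $t\ge 1$ and $E_t=\{1,\dots,t\}$. $\mathcal{M}=(E_t,\mathcal{T})$ is a simple oriented matroid (no loops, parallel or antiparallel elements) with set of topes $\mathcal{T}\subseteq\{+,-\}^{E_t}$, closed under negation (so $|\mathcal{T}|$ is even). For $e\in E_t$, the positive halfspace is $\mathcal{T}^+_e=\{T\in\mathcal{T}: T(e)=+\}$. For $G\subseteq\mathcal{T}$, $-G=\{-T:T\in G\}$. For a set $X$, $\binom{X}{j}$ denotes the family of $j$-element subsets of $X$. A tope committee for $\mathcal{M}$ is a subset $\mathcal{K}^{\ast}\subset\mathcal{T}$ with $|\{T\in\mathcal{K}^{\ast}: T(e)=+\}|>\tfrac12|\mathcal{K}^{\ast}|$ for every $e\in E_t$. $\mathring{\kappa}^{\ast}_k(\mathcal{M})$ is the number of tope committees of cardinality $k$ containing no pair of opposite topes $\{T,-T\}$. Binomial coefficients $\binom{n}{j}$ are $0$ when $j>n$ or $j<0$. *)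

From HB Require Import structures.
From mathcomp Require Import all_boot all_order all_algebra.
Set Implicit Arguments. Unset Strict Implicit. Unset Printing Implicit Defensive.
Import GRing.Theory Num.Theory.

(* Ground set E_t = {1,..,t} is represented by 'I_t.
   A sign vector in {+,-,0}^E_t is a finite function 'I_t -> option bool,
   with Some true = +, Some false = -, None = 0. *)
Definition svec (t : nat) := {ffun 'I_t -> option bool}.

Definition sv_zero (t : nat) : svec t := [ffun => None].
Definition sv_neg t (X : svec t) : svec t := [ffun e => omap negb (X e)].
Definition sv_comp t (X Y : svec t) : svec t :=
  [ffun e => if X e is Some b then Some b else Y e].
Definition sv_sep t (X Y : svec t) (e : 'I_t) : bool :=
  match X e, Y e with Some a, Some b => a != b | _, _ => false end.
Definition sv_le t (X Y : svec t) : Prop :=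
  forall e, X e != None -> Y e = X e.

(* Covector axioms of an oriented matroid (Bjorner et al., Def. 4.1.1). *)
Definition is_OM_covectors t (L : {set svec t}) : Prop :=
  [/\ sv_zero t \in L,
      (forall X, X \in L -> sv_neg X \in L),
      (forall X Y, X \in L -> Y \in L -> sv_comp X Y \in L) &
      (forall X Y e, X \in L -> Y \in L -> sv_sep X Y e ->
         exists2 Z, Z \in L &
           Z e = None /\ (forall f, ~~ sv_sep X Y f -> Z f = sv_comp X Y f))].

(* Simple: no loops, no parallel and no antiparallel pairs of elements. *)
Definition OM_simple t (L : {set svec t}) : Prop :=
  (forall e : 'I_t, exists2 X, X \in L & X e != None) /\
  (forall e f : 'I_t, e != f ->
     ~ (forall X, X \in L -> X e = X f) /\
     ~ (forall X, X \in L -> X e = omap negb (X f))).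

(* Full sign vectors in {+,-}^E_t (true = +). *)
Definition tvec (t : nat) := {ffun 'I_t -> bool}.
Definition tv_lift t (T : tvec t) : svec t := [ffun e => Some (T e)].
Definition tv_neg t (T : tvec t) : tvec t := [ffun e => ~~ T e].

(* Topes: maximal covectors (all of which lie in {+,-}^E_t for a loopless OM). *)
Definition sv_leb t (X Y : svec t) : bool :=
  [forall e, (X e != None) ==> (Y e == X e)].
Definition is_tope t (L : {set svec t}) (X : svec t) : bool :=
  (X \in L) && [forall Y in L, sv_leb X Y ==> (Y == X)].

Definition topes t (L : {set svec t}) : {set tvec t} :=
  [set T : tvec t | is_tope L (tv_lift T)].

Definition halfspace t (Tp : {set tvec t}) (e : 'I_t) : {set tvec t} :=
  [set T in Tp | T e].

Definition negset t (G : {set tvec t}) : {set tvec t} := [set tv_neg T | T in G].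

Definition tope_committee t (Tp : {set tvec t}) (K : {set tvec t}) : bool :=
  (K \subset Tp) && [forall e : 'I_t, #|K| < 2 * #|[set T in K | T e]| ].

Definition no_opposite t (K : {set tvec t}) : bool :=
  [forall T in K, tv_neg T \notin K].

Definition kappa_ring t (Tp : {set tvec t}) (k : nat) : nat :=
  #|[set K : {set tvec t} | [&& tope_committee Tp K, #|K| == k & no_opposite K]]|.

Definition Pfam t (Tp : {set tvec t}) (h : nat) : {set {set tvec t}} :=
  \bigcup_(e : 'I_t) [set G : {set tvec t} | (G \subset halfspace Tp e) && (#|G| == h)].

Definition Ufam t (GG : {set {set tvec t}}) : {set tvec t} := \bigcup_(G in GG) G.

From HB Require Import structures.
From mathcomp Require Import all_boot all_order all_algebra zify.
Import GRing.Theory Num.Theory.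
Set Implicit Arguments. Unset Strict Implicit. Unset Printing Implicit Defensive.

(* Since the topes are closed under negation, every halfspace T^+_e has exactly
   |T|/2 elements, and a k-set K of topes fails to be a committee exactly when some
   halfspace keeps at least h topes outside K, i.e. when K misses some member of
   P. Inclusion-exclusion over the families G of members of P that K misses
   reduces the count to the number of k-sets without opposite pairs inside
   T \ U_G. That set consists of |U_G u -U_G| - |U_G| topes whose opposite lies
   in U_G and of (|T| - |U_G u -U_G|)/2 opposite pairs, so choosing j single topes
   and k - j pairs, with one of two topes from each pair, gives the inner sum.
   Terms with |U_G| > |T| - k vanish, and the bound on #G is then automatic. *)

Section InclusionExclusion.
Local Open Scope ring_scope.

Lemma sum_alternating_subsets (T : finType) (B : {set T}) :
  \sum_(A : {set T} | A \subset B) (-1) ^+ #|A| = (B == set0)%:R :> int.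
Proof.
rewrite (partition_big (fun A : {set T} => inord #|A| : 'I_(#|B|).+1) predT) //=.
transitivity (\sum_(i < #|B|.+1) (1 ^+ (#|B| - i) * (-1) ^+ i) *+ 'C(#|B|, i) : int).
  apply: eq_bigr => i _; rewrite expr1n mul1r -cards_draws -sumr_const.
  apply: eq_big => A; last first.
    by case/andP => AB /eqP <-; rewrite inordK // ltnS subset_leq_card.
  rewrite inE; case AB : (A \subset B) => //=.
  by rewrite -val_eqE /= inordK // ltnS subset_leq_card.
by rewrite -exprDn addrN expr0n cards_eq0.
Qed.

Lemma card_set_sum_indicator (T : finType) (F : {set T}) (Q : pred T) :
  #|[set x in F | Q x]|%:Z = \sum_(x in F) (Q x)%:R.
Proof.
rewrite -natz -sumr_const big_mkcond [RHS]big_mkcond /=.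
by apply: eq_bigr => x _; rewrite inE; case: (x \in F); case: (Q x).
Qed.

Lemma inclusion_exclusion (I T : finType) (P : {set I}) (bad : I -> T -> bool)
    (F : {set T}) :
  #|[set x in F | [forall i in P, ~~ bad i x]]|%:Z =
  \sum_(A : {set I} | A \subset P)
    (-1) ^+ #|A| * #|[set x in F | [forall i in A, bad i x]]|%:Z.
Proof.
under eq_bigr do rewrite card_set_sum_indicator big_distrr.
rewrite exchange_big card_set_sum_indicator; apply: eq_bigr => x _ /=.
have -> : [forall i in P, ~~ bad i x] = ([set i in P | bad i x] == set0).
  apply/forall_inP/eqP => [noP | P0 i iP].
    by apply/setP => i; rewrite !inE; apply/negbTE/andP => -[/noP/negP].
  apply/negP => bi; suff : i \in set0 by rewrite inE.
  by rewrite -P0 inE iP bi.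
rewrite -sum_alternating_subsets big_mkcond [RHS]big_mkcond /=.
apply: eq_bigr => A _; case AP : (A \subset P); last first.
  case: ifP => // /subset_trans sub; move: AP; rewrite sub //.
  by apply/subsetP => i; rewrite inE => /andP[].
rewrite (_ : (A \subset _) = [forall i in A, bad i x]); first by case: ifP; rewrite ?mulr1 ?mulr0.
apply/subsetP/forall_inP => [sub i /sub|bA i iA]; first by rewrite inE => /andP[].
by rewrite inE (subsetP AP _ iA) bA.
Qed.

End InclusionExclusion.

Definition pair_free_choices (s q k : nat) : nat :=
  \sum_(0 <= j < k.+1) 'C(s, j) * 'C(q, k - j) * 2 ^ (k - j).

Lemma pair_free_choices_k0 s q : pair_free_choices s q 0 = 1.
Proof. by rewrite /pair_free_choices big_nat1 !bin0. Qed.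

Lemma pair_free_choices_00 k : pair_free_choices 0 0 k.+1 = 0.
Proof. by rewrite /pair_free_choices big1_seq // => -[|j] _; rewrite ?bin0n. Qed.

Lemma pair_free_choices_0q q k : pair_free_choices 0 q k = 'C(q, k) * 2 ^ k.
Proof.
by rewrite /pair_free_choices big_nat_recl // bin0 mul1n subn0 big1 ?addn0.
Qed.

Lemma pair_free_choicesSs s q k :
  pair_free_choices s.+1 q k.+1 = pair_free_choices s q k.+1 + pair_free_choices s q k.
Proof.
rewrite /pair_free_choices big_nat_recl // [in RHS]big_nat_recl // !bin0.
rewrite -addnA -big_split /=; congr (_ + _).
by apply: eq_bigr => j _; rewrite subSS binS !mulnDl.
Qed.

Lemma pair_free_choicesSq s q k :
  pair_free_choices s q.+1 k.+1 = pair_free_choices s q k.+1 + 2 * pair_free_choices s q k.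
Proof.
rewrite /pair_free_choices big_nat_recr // [X in X + _]big_nat_recr //= subnn !bin0.
rewrite muln1 addnAC big_distrr -big_split /=; congr (_ + _).
rewrite big_nat_cond [in RHS]big_nat_cond; apply: eq_bigr => j /andP[/andP[_ jk] _].
by rewrite subSn // binS expnS mulnDr mulnDl [2 * (_ * _)]mulnC -!mulnA [2 * 2 ^ _]mulnC.
Qed.

Section OppositeFreeSubsets.
Variables (T : finType) (op : T -> T).
Hypotheses (opK : involutive op) (op_neq : forall x, op x != x).
Implicit Types (x : T) (X K U : {set T}).

Definition op_free K := [forall x in K, op x \notin K].

Definition op_free_subsets X k :=
  [set K : {set T} | [&& K \subset X, #|K| == k & op_free K]].

Definition op_paired X := [set x in X | op x \in X].

Lemma op_free_subsets0 X : #|op_free_subsets X 0| = 1.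
Proof.
rewrite (_ : op_free_subsets X 0 = [set set0]) ?cards1 //.
apply/setP => K; rewrite !inE cards_eq0.
case: eqP => [->|]; rewrite ?andbF //= sub0set.
by apply/forall_inP => x; rewrite inE.
Qed.

Lemma card_op_free_subsets_small X k : #|X| < k -> #|op_free_subsets X k| = 0.
Proof.
move=> ltXk; apply: eq_card0 => K; rewrite inE.
apply/negP => /and3P[/subset_leq_card KX /eqP cK _].
by move: ltXk; rewrite -cK ltnNge KX.
Qed.

(* Split according to whether x is in K; if it is, [op x] must not be. *)
Lemma card_op_free_subsetsD1 X x k : x \in X ->
  #|op_free_subsets X k.+1| =
    #|op_free_subsets (X :\ x) k.+1| + #|op_free_subsets (X :\ x :\ op x) k|.
Proof.
move=> xX; rewrite -(cardsID [set K : {set T} | x \in K]) addnC; congr (_ + _).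
  apply: eq_card => K; rewrite !inE subsetD1.
  by case: (x \in K); rewrite ?andbF ?andbT.
have xK_inj : {in op_free_subsets (X :\ x :\ op x) k &, injective (fun A => x |: A)}.
  move=> A B; rewrite !inE !subsetD1 => /andP[/andP[/andP[_ xA] _] _].
  move=> /andP[/andP[/andP[_ xB] _] _] AB.
  by rewrite -(setU1K xA) -(setU1K xB) AB.
rewrite -(card_in_imset xK_inj); apply: eq_card => K; rewrite !inE; apply/idP/imsetP.
  case/andP=> /and3P[KX /eqP cK /forall_inP freeK] xK.
  exists (K :\ x); last by rewrite setD1K.
  rewrite !inE !subsetD1 subDset (subset_trans KX) ?subsetUr //=.
  rewrite !inE eqxx /= (negbTE (freeK _ xK)) andbF /=.
  rewrite (cardsD1 x K) xK add1n /= in cK; case: cK => ->; rewrite eqxx /=.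
  apply/forall_inP => y; rewrite !inE => /andP[_ yK]; apply/negP => /andP[_].
  exact/negP/freeK.
case=> A; rewrite !inE => /and3P[AX /eqP cA /forall_inP freeA] ->.
rewrite setU11 andbT.
move: AX; rewrite !subsetD1 => /andP[/andP[AX xA] opxA].
rewrite subUset sub1set xX AX cardsU1 xA cA eqxx /=.
apply/forall_inP => y; rewrite !inE; case/orP => [/eqP ->|yA].
  by rewrite negb_or opxA andbT op_neq.
rewrite negb_or (freeA _ yA) andbT (inv_eq opK).
by apply: contraNN opxA => /eqP <-.
Qed.

Lemma op_free_subsets_disjoint X U k :
  [set K in op_free_subsets X k | [disjoint K & U]] = op_free_subsets (X :\: U) k.
Proof.
apply/setP => K; rewrite !inE subsetD -!andbA.
by case: [disjoint K & U]; rewrite ?andbT ?andbF.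
Qed.

Lemma op_pairedD1 X x : op_paired (X :\ x) = op_paired X :\ x :\ op x.
Proof.
apply/setP => y; rewrite !inE (inv_eq opK).
by case: (y == x); case: (y == op x); case: (y \in X); case: (op y \in X).
Qed.

Lemma op_pairedD2 X x : op_paired (X :\ x :\ op x) = op_paired X :\ x :\ op x.
Proof.
rewrite !op_pairedD1 opK; apply/setP => y; rewrite !inE.
by case: (y == x); case: (y == op x).
Qed.

Lemma op_pairedD1_id X x : op x \notin X -> op_paired (X :\ x) = op_paired X.
Proof.
move=> opxX; apply/setP => y; rewrite op_pairedD1 !inE.
case: (eqVneq y x) => [->|_]; first by rewrite (negbTE opxX) !andbF.
by case: (eqVneq y (op x)) => [->|_]; rewrite ?(negbTE opxX).
Qed.

Lemma card_op_free_subsets_set0 q k : #|op_paired set0| = q.*2 ->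
  #|op_free_subsets set0 k| = pair_free_choices (#|@set0 T| - q.*2) q k.
Proof.
rewrite (_ : op_paired set0 = set0); last by apply/setP => y; rewrite !inE.
rewrite cards0 => /esym/eqP; rewrite double_eq0 => /eqP ->.
case: k => [|k]; first by rewrite op_free_subsets0 pair_free_choices_k0.
by rewrite pair_free_choices_00 card_op_free_subsets_small ?cards0.
Qed.

Lemma card_op_free_subsets X q k : #|op_paired X| = q.*2 ->
  #|op_free_subsets X k| = pair_free_choices (#|X| - q.*2) q k.
Proof.
move: {2}#|X| (leqnn #|X|) => n; elim: n X q k => [|n IH] X q k leXn;
  have [->|[x xX]] := set_0Vmem X; try exact: card_op_free_subsets_set0.
  by move: leXn; rewrite (cardsD1 x) xX.
case: k => [|k]; first by rewrite op_free_subsets0 pair_free_choices_k0.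
move=> pairedX; rewrite (card_op_free_subsetsD1 _ xX).
have cardXx : #|X :\ x| = #|X|.-1 by rewrite (cardsD1 x X) xX.
have leX1 : #|X :\ x| <= n by rewrite cardXx; lia.
have [opxX|opxX] := boolP (op x \in X); last first.
  have paired_lt : #|op_paired X| < #|X|.
    rewrite -(op_pairedD1_id opxX) (cardsD1 x X) xX.
    by apply/subset_leq_card/subsetP => y; rewrite inE => /andP[].
  have -> : X :\ x :\ op x = X :\ x.
    by apply/setDidPl; rewrite disjoint_sym disjoints1 !inE (negbTE opxX) andbF.
  rewrite !(IH _ q) ?op_pairedD1_id // cardXx.
  have -> : #|X| - q.*2 = (#|X|.-1 - q.*2).+1 by lia.
  by rewrite pair_free_choicesSs.
have pairedX_le : #|op_paired X| <= #|X|.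
  by apply/subset_leq_card/subsetP => y; rewrite inE => /andP[].
have cardP : #|op_paired X| = #|op_paired X :\ x :\ op x|.+2.
  by rewrite (cardsD1 x) (cardsD1 (op x) (op_paired X :\ x)) !inE opK op_neq xX opxX.
case: q pairedX => [|q] pairedX; first by rewrite cardP in pairedX.
have cardXx2 : #|X :\ x :\ op x| = #|X|.-2.
  by move: cardXx; rewrite (cardsD1 (op x) (X :\ x)) !inE op_neq opxX; lia.
have leX2 : #|X :\ x :\ op x| <= n by rewrite cardXx2; lia.
have cardP' : #|op_paired X :\ x :\ op x| = q.*2.
  by move: pairedX; rewrite cardP doubleS => -[].
rewrite (IH _ q) ?op_pairedD1 // (IH _ q) ?op_pairedD2 // cardXx cardXx2.
set s := #|X| - q.+1.*2.
have -> : #|X|.-1 - q.*2 = s.+1 by lia.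
have -> : #|X|.-2 - q.*2 = s by lia.
by rewrite pair_free_choicesSs pair_free_choicesSq mul2n -addnn addnA.
Qed.

End OppositeFreeSubsets.

Section SignVectors.
Variable t : nat.
Implicit Types (x : tvec t) (U Y : {set tvec t}).

Lemma tv_negK : involutive (@tv_neg t).
Proof. by move=> x; apply/ffunP => e; rewrite !ffunE negbK. Qed.

Lemma tv_neg_neq : 0 < t -> forall x, tv_neg x != x.
Proof. by move=> t_gt0 x; apply/eqP => /ffunP/(_ (Ordinal t_gt0)); rewrite ffunE; case: (x _). Qed.

Lemma in_negset x U : (x \in negset U) = (tv_neg x \in U).
Proof.
apply/imsetP/idP => [[y yU ->]|negxU]; first by rewrite tv_negK.
by exists (tv_neg x); rewrite ?tv_negK.
Qed.

Lemma card_neg_closed Y e : {in Y, forall y, tv_neg y \in Y} ->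
  #|Y| = 2 * #|[set y in Y | y e]|.
Proof.
move=> Y_neg; rewrite -(cardsID [set y : tvec t | y e] Y) mul2n -addnn.
have -> : Y :\: [set y : tvec t | y e] = negset (Y :&: [set y : tvec t | y e]).
  apply/setP => y; rewrite in_negset !inE ffunE.
  case: (y e); rewrite ?andbF ?andbT //=.
  by apply/idP/idP => /Y_neg; rewrite ?tv_negK.
rewrite card_imset; last exact: inv_inj tv_negK.
by congr (_ + _); apply: eq_card => y; rewrite !inE andbC.
Qed.

Lemma sv_negK : involutive (@sv_neg t).
Proof. by move=> X; apply/ffunP => e; rewrite !ffunE; case: (X e) => [[]|]. Qed.

Lemma sv_leb_neg (X Y : svec t) : sv_leb (sv_neg X) Y = sv_leb X (sv_neg Y).
Proof.
apply: eq_forallb => e; rewrite !ffunE.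
by case: (X e) => [[]|]; case: (Y e) => [[]|].
Qed.

Lemma topes_neg (L : {set svec t}) : is_OM_covectors L ->
  {in topes L, forall T, tv_neg T \in topes L}.
Proof.
case=> _ L_neg _ _ T; rewrite !inE /is_tope => /andP[TL T_max].
have -> : tv_lift (tv_neg T) = sv_neg (tv_lift T) by apply/ffunP => e; rewrite !ffunE.
rewrite L_neg //=; apply/forall_inP => Y YL; apply/implyP => leTY.
have := forall_inP T_max (sv_neg Y) (L_neg _ YL).
by rewrite -sv_leb_neg leTY => /eqP <-; rewrite sv_negK.
Qed.

End SignVectors.

Section TopeCommittees.
Variables (t : nat) (Tp : {set tvec t}).
Implicit Types (K U : {set tvec t}) (GG : {set {set tvec t}}).

Lemma Ufam_sub h GG : GG \subset Pfam Tp h -> Ufam GG \subset Tp.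
Proof.
move=> /subsetP GGP; apply/bigcupsP => G /GGP /bigcupP[e _].
rewrite inE => /andP[GH _]; apply: subset_trans GH _.
by apply/subsetP => T; rewrite inE => /andP[].
Qed.

Lemma card_Pfam_subfamily h GG : GG \subset Pfam Tp h -> #|GG| <= 'C(#|Ufam GG|, h).
Proof.
move=> /subsetP GGP; rewrite -cards_draws; apply/subset_leq_card/subsetP => G GG_G.
have /bigcupP[e _] := GGP _ GG_G; rewrite !inE => /andP[_ ->].
by rewrite andbT (bigcup_sup G).
Qed.

Lemma Pfam_disjoint h K :
  [exists G in Pfam Tp h, [disjoint G & K]] = [exists e, h <= #|halfspace Tp e :\: K|].
Proof.
apply/exists_inP/existsP => [[G /bigcupP[e _]]|[e le_h]].
  rewrite inE => /andP[GH /eqP <-] dGK; exists e.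
  by apply: subset_leq_card; rewrite subsetD GH dGK.
have [G] : exists G, G \in [set A : {set tvec t} | A \subset halfspace Tp e :\: K & #|A| == h].
  by apply/card_gt0P; rewrite cards_draws bin_gt0.
rewrite inE subsetD -andbA => /and3P[GH dGK cG].
by exists G => //; apply/bigcupP; exists e => //; rewrite inE GH.
Qed.

Hypothesis Tp_neg : {in Tp, forall T, tv_neg T \in Tp}.

Lemma tope_committee_halfspace K : K \subset Tp -> #|K| <= #|Tp| %/ 2 ->
  tope_committee Tp K = [forall e, #|halfspace Tp e :\: K| < (#|Tp| - #|K| + 1) %/ 2].
Proof.
move=> KTp le_K; rewrite /tope_committee KTp; apply: eq_forallb => e.
have cardTp : #|Tp| = 2 * #|halfspace Tp e| by apply: card_neg_closed.
have -> : [set T in K | T e] = halfspace Tp e :&: K.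
  apply/setP => T; rewrite !inE andbC.
  by case TK : (T \in K); rewrite ?andbF ?(subsetP KTp _ TK).
have := subset_leq_card (subsetIl (halfspace Tp e) K).
rewrite cardsD => le_a; apply/idP/idP => ?; lia.
Qed.

Lemma tope_committee_Pfam K k : K \subset Tp -> #|K| = k -> k <= #|Tp| %/ 2 ->
  tope_committee Tp K =
    [forall G in Pfam Tp ((#|Tp| - k + 1) %/ 2), ~~ [disjoint K & G]].
Proof.
move=> KTp cK le_k; subst k; rewrite tope_committee_halfspace //.
set h := (_ %/ 2).
have -> : [forall G in Pfam Tp h, ~~ [disjoint K & G]] =
          ~~ [exists G in Pfam Tp h, [disjoint G & K]].
  by rewrite negb_exists_in; apply: eq_forallb => G; rewrite disjoint_sym.
rewrite Pfam_disjoint negb_exists.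
by apply: eq_forallb => e; rewrite ltnNge.
Qed.

Hypothesis t_gt0 : 0 < t.

Lemma card_op_free_subsets_complement U k : U \subset Tp ->
  #|op_free_subsets (@tv_neg t) (Tp :\: U) k| =
    pair_free_choices (#|U :|: negset U| - #|U|) ((#|Tp| - #|U :|: negset U|) %/ 2) k.
Proof.
move=> UTp; set V := U :|: negset U.
have VTp : V \subset Tp.
  rewrite subUset UTp; apply/subsetP => T; rewrite in_negset.
  by move=> /(subsetP UTp)/Tp_neg; rewrite tv_negK.
have pairedE : op_paired (@tv_neg t) (Tp :\: U) = Tp :\: V.
  apply/setP => T; rewrite !inE in_negset.
  case TU : (T \in U); case nTU : (tv_neg T \in U); rewrite ?andbF ?andbT //=.
  by case TTp : (T \in Tp); rewrite //= Tp_neg.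
have cardTpV : #|Tp :\: V| = ((#|Tp| - #|V|) %/ 2).*2.
  rewrite -(cardsDS VTp) (@card_neg_closed _ (Tp :\: V) (Ordinal t_gt0)).
    by rewrite mulKn // mul2n.
  by move=> T; rewrite -pairedE !inE tv_negK => /andP[-> ->].
rewrite (@card_op_free_subsets _ _ (@tv_negK t) (tv_neg_neq t_gt0) _ ((#|Tp| - #|V|) %/ 2));
  last by rewrite pairedE.
congr pair_free_choices; rewrite -cardTpV cardsDS // cardsDS //.
move: (subset_leq_card (subsetUl U (negset U))) (subset_leq_card VTp).
(* Generalizing the cardinals lets [lia] identify card terms elaborated with
   different (convertible) finType instances. *)
move: #|Tp| #|U| #|V| => n u v; lia.
Qed.

Local Open Scope ring_scope.

Lemma kappa_ring_inclusion_exclusion k : (k <= #|Tp| %/ 2)%N ->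
  (kappa_ring Tp k)%:Z =
    (\sum_(GG : {set {set tvec t}} | GG \subset Pfam Tp ((#|Tp| - k + 1) %/ 2))
       (-1) ^+ #|GG| * #|op_free_subsets (@tv_neg t) (Tp :\: Ufam GG) k|%:Z).
Proof.
move=> le_k; set h := ((#|Tp| - k + 1) %/ 2)%N.
have -> : kappa_ring Tp k = #|[set K in op_free_subsets (@tv_neg t) Tp k |
                                 [forall G in Pfam Tp h, ~~ [disjoint K & G]]]|.
  apply: eq_card => K; rewrite !inE.
  have [KTp|nKTp] := boolP (K \subset Tp); last by rewrite /tope_committee (negbTE nKTp).
  have [cK|] := eqVneq #|K| k; last by rewrite !andbF.
  by rewrite (tope_committee_Pfam KTp cK) // andbC.
rewrite (inclusion_exclusion _ (fun G K : {set tvec t} => [disjoint K & G])).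
apply: eq_bigr => GG _; rewrite -op_free_subsets_disjoint; congr (_ * Posz _).
apply: eq_card => K; rewrite !inE; congr (_ && _).
exact/forall_inP/bigcup_disjointP.
Qed.

End TopeCommittees.

Local Open Scope ring_scope.

Theorem mainTheorem5 (t : nat) (L : {set svec t}) (k : nat) :
  (1 <= t)%N ->
  is_OM_covectors L -> OM_simple L ->
  (1 <= k)%N -> (k <= #|topes L| %/ 2)%N ->
  let Tp := topes L in
  let N := #|Tp| in
  let h := ((N - k + 1) %/ 2)%N in
  (kappa_ring Tp k)%:Z =
    ('C(N %/ 2, k) * 2 ^ k)%:Z +
    \sum_(GG : {set {set tvec t}} |
            [&& GG \subset Pfam Tp h, (1 <= #|GG|)%N,
                (#|GG| <= 'C(N - k, h))%N & (#|Ufam GG| <= N - k)%N])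
      (-1) ^+ #|GG| *
      (\sum_(0 <= j < k.+1)
         ('C(#|Ufam GG :|: negset (Ufam GG)| - #|Ufam GG|, j) *
          'C((N - #|Ufam GG :|: negset (Ufam GG)|) %/ 2, k - j) *
          2 ^ (k - j))%:Z).
Proof.
move=> t_gt0 L_OM _ _ le_k Tp N h.
have Tp_neg := topes_neg L_OM.
have Ufam0 : Ufam set0 = set0 :> {set tvec t} by rewrite /Ufam big_set0.
rewrite kappa_ring_inclusion_exclusion // (bigD1 set0) ?sub0set //= Ufam0 cards0.
rewrite expr0 mul1r card_op_free_subsets_complement ?sub0set // /negset imset0.
rewrite setU0 cards0 !subn0 pair_free_choices_0q; congr (_ + _).
rewrite big_mkcond [RHS]big_mkcond; apply: eq_bigr => GG _ /=.
have [GGP|] := boolP (GG \subset Pfam Tp h) => //=.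
rewrite card_gt0; case: (GG != set0) => //=.
have UTp := Ufam_sub GGP.
have [leU|ltU] := leqP #|Ufam GG| (N - k).
  rewrite (leq_trans (card_Pfam_subfamily GGP) (leq_bin2l _ leU)).
  by rewrite card_op_free_subsets_complement // -natz natr_sum; under eq_bigr do rewrite natz.
rewrite andbF card_op_free_subsets_small ?mulr0 // cardsDS //.
have : (k <= N)%N by apply: leq_trans le_k (leq_div _ _).
move: ltU (subset_leq_card UTp); rewrite /N; move: #|Tp| #|Ufam GG| => n u; lia.
Qed.
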